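(* There exists a constant $D>1$ such that testing $\mathsf{Lattice\text{-}Eval}((\{0,1\};\wedge,\vee),D)$ restricted to instances with threshold $\ell=1$ with one-sided error requires a linear number of queries; i.e., there is $\epsilon>0$ such that every one-sided-error $\epsilon$-tester for this problem makes $\Omega(n)$ queries on some instances with $n$ variables.
   Context: For a finite lattice $\mathbb L=(L;\wedge,\vee)$ and a constant $D>1$, $\mathsf{Lattice\text{-}Eval}(\mathbb L,D)$ is the assignment problem whose instances consist of: a circuit $C$ on a variable set $V$ over the basis $\{\wedge,\vee\}$ (gates of fan-in 2) of depth less than $D+D\log_2|V|$; an element $\ell\in L$; and a weight function $w:V\to[0,1]$ with $\sum_x w(x)=1$. Assignments are maps $f:V\to L$, and $f$ is satisfying if $C(f)\ge\ell$ in the lattice order, where $C(f)$ is the value of $C$ under $f$. Distance: $\mathrm{dist}_{\mathcal I}(f)$ is the minimum over satisfying $g$ of $\sum_{x:f(x)\ne g(x)}w(x)$; $f$ is $\epsilon$-far if this exceeds $\epsilon$. A one-sided $\epsilon$-tester gets the instance and $\epsilon$, queries values of $f$, always accepts satisfying $f$ and rejects $\epsilon$-far $f$ with probability $\ge 2/3$. *)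

From Stdlib Require Import Reals.
From mathcomp Require Import all_boot.

Set Implicit Arguments.
Unset Strict Implicit.
Unset Printing Implicit Defensive.

(* A circuit (DAG) is represented by its unfolding into a formula tree;
   this preserves the computed function and the depth exactly. *)
Inductive circuit (n : nat) : Type :=
| CVar : 'I_n -> circuit n
| CAnd : circuit n -> circuit n -> circuit n
| COr  : circuit n -> circuit n -> circuit n.

Fixpoint ceval (n : nat) (C : circuit n) (f : 'I_n -> bool) : bool :=
  match C with
  | CVar x => f x
  | CAnd C1 C2 => ceval C1 f && ceval C2 f
  | COr C1 C2 => ceval C1 f || ceval C2 f
  end.

Fixpoint cdepth (n : nat) (C : circuit n) : nat :=
  match C with
  | CVar _ => 0
  | CAnd C1 C2 => (maxn (cdepth C1) (cdepth C2)).+1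
  | COr C1 C2 => (maxn (cdepth C1) (cdepth C2)).+1
  end.

Record instance (n : nat) : Type := Instance {
  inst_C : circuit n;
  inst_l : bool;
  inst_w : 'I_n -> R
}.

Definition wsum (n : nat) (w : 'I_n -> R) (P : 'I_n -> bool) : R :=
  \big[Rplus/R0]_(i : 'I_n | P i) w i.

Definition log2 (x : R) : R := Rdiv (ln x) (ln (INR 2)).

Definition valid_instance (D : R) (n : nat) (I : instance n) : Prop :=
  Rlt (INR (cdepth (inst_C I))) (Rplus D (Rmult D (log2 (INR n)))) /\
  (forall x, Rle R0 (inst_w I x) /\ Rle (inst_w I x) R1) /\
  wsum (inst_w I) (fun _ => true) = R1.

(* f is satisfying iff C(f) >= l in the order 0 <= 1 of the lattice. *)
Definition satisfying (n : nat) (I : instance n) (f : 'I_n -> bool) : bool :=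
  inst_l I ==> ceval (inst_C I) f.

(* f is eps-far: dist(f) = min over satisfying g of the weighted Hamming
   distance exceeds eps (min over the empty set = +infinity). *)
Definition far (eps : R) (n : nat) (I : instance n) (f : 'I_n -> bool) : Prop :=
  forall g : 'I_n -> bool, satisfying I g ->
    Rlt eps (wsum (inst_w I) (fun x => f x != g x)).

(* Deterministic adaptive query algorithms = decision trees. *)
Inductive dtree (n : nat) : Type :=
| Leaf : bool -> dtree n                         (* true = accept *)
| Query : 'I_n -> dtree n -> dtree n -> dtree n. (* query x; branch on f x = false / true *)

Fixpoint run (n : nat) (t : dtree n) (f : 'I_n -> bool) : bool :=
  match t with
  | Leaf b => b
  | Query x t0 t1 => if f x then run t1 f else run t0 f
  end.

Fixpoint nqueries (n : nat) (t : dtree n) (f : 'I_n -> bool) : nat :=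
  match t with
  | Leaf _ => 0
  | Query x t0 t1 => (if f x then nqueries t1 f else nqueries t0 f).+1
  end.

(* A randomized query algorithm: a finite probability distribution over
   decision trees, given as a list of (probability, tree). *)
Definition rtree (n : nat) : Type := list (R * dtree n).

Definition is_distribution (n : nat) (T : rtree n) : Prop :=
  (forall p, List.In p T -> Rle R0 (fst p)) /\
  List.fold_right (fun p acc => Rplus (fst p) acc) R0 T = R1.

Definition acc_prob (n : nat) (T : rtree n) (f : 'I_n -> bool) : R :=
  List.fold_right (fun p acc => Rplus (Rmult (fst p) (if run (snd p) f then R1 else R0)) acc) R0 T.

(* A tester for the problem restricted to threshold l = 1: given the instance
   (eps being fixed), it is a randomized query algorithm. *)
Definition tester : Type := forall n : nat, instance n -> rtree n.

Definition one_sided_tester (D eps : R) (T : tester) : Prop :=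
  forall (n : nat) (I : instance n),
    valid_instance D I -> inst_l I = true ->
    is_distribution (T n I) /\
    (forall f, satisfying I f -> acc_prob (T n I) f = R1) /\
    (forall f, far eps I f -> Rle (acc_prob (T n I) f) (Rdiv R1 (INR 3))).

From Stdlib Require Import Reals Lra.
From mathcomp Require Import all_boot zify.

(* The hard instances come from Valiant-style amplification.  Let F_0 be a uniformly random
   variable and F_(t+1) = (A /\ B) \/ (C /\ D) for independent copies A, B, C, D of F_t; instead of
   probabilities we count over the list of all such formulas.  On an input with at most n/8 ones,
   p = Pr[F_t is true] satisfies p' <= 2 p^2, and on an input with at most n/8 zeros,
   q = Pr[F_t is false] satisfies q' <= 4 q^2, so both drop below 2^-(2^t).  For 2^t > n a union
   bound over the 2^n inputs yields a formula of depth 2t = O(log n) that is false on every input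
   with few ones and true on every input with few zeros.  Under uniform weights the all-false
   assignment is then 1/8-far, so a one-sided tester rejects it with some decision tree of positive
   probability; had that tree made fewer than n/8 queries, setting the unqueried variables to 1
   would give a satisfying assignment that it also rejects. *)

Set Implicit Arguments.
Unset Strict Implicit.
Unset Printing Implicit Defensive.

Section AllPairs.
Variables (T1 T2 T3 : Type) (f : T1 -> T2 -> T3).

Lemma count_allpairs (P : pred T3) s1 s2 :
  count P [seq f a b | a <- s1, b <- s2] =
  \sum_(a <- s1) count (fun b => P (f a b)) s2.
Proof.
elim: s1 => [|a s IH]; first by rewrite big_nil.
by rewrite allpairs_cons count_cat count_map IH big_cons.
Qed.

Lemma count_allpairs_and (P : pred T3) (P1 : pred T1) (P2 : pred T2) s1 s2 :
  (forall a b, P (f a b) = P1 a && P2 b) ->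
  count P [seq f a b | a <- s1, b <- s2] = count P1 s1 * count P2 s2.
Proof.
move=> PE; rewrite count_allpairs.
elim: s1 => [|a s IH]; first by rewrite big_nil.
rewrite big_cons IH (eq_count (PE a)) /=.
by case: (P1 a); rewrite ?count_pred0.
Qed.

Lemma count_allpairs_or (P : pred T3) (P1 : pred T1) (P2 : pred T2) s1 s2 :
  (forall a b, P (f a b) -> P1 a || P2 b) ->
  count P [seq f a b | a <- s1, b <- s2] <=
  count P1 s1 * size s2 + size s1 * count P2 s2.
Proof.
move=> PP; rewrite count_allpairs.
elim: s1 => [|a s IH]; first by rewrite big_nil.
rewrite big_cons /=.
have Pa : count (fun b => P (f a b)) s2 <= P1 a * size s2 + count P2 s2.
  case P1a: (P1 a); first by rewrite mul1n (leq_trans (count_size _ _)) ?leq_addr.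
  by rewrite mul0n; apply: sub_count => b /PP; rewrite P1a.
have := leq_add Pa IH; nia.
Qed.

Lemma all_allpairs (P : pred T3) (P1 : pred T1) (P2 : pred T2) s1 s2 :
  all P1 s1 -> all P2 s2 -> (forall a b, P1 a -> P2 b -> P (f a b)) ->
  all P [seq f a b | a <- s1, b <- s2].
Proof.
move=> all1 all2 PP; elim: s1 all1 => [|a s IH] //= /andP[P1a /IH].
rewrite all_cat all_map => ->; rewrite andbT.
by apply: sub_all all2 => b; apply: PP.
Qed.

End AllPairs.

Lemma squaring_decay (u N : nat -> nat) a :
  (forall t, u t.+1 <= u t ^ 2 * N t ^ 2) -> (forall t, N t.+1 = N t ^ 4) ->
  a * u 0 <= N 0 -> forall t, a ^ 2 ^ t * u t <= N t.
Proof.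
move=> u_rec N_rec u0; elim=> [|t IH]; first by rewrite expn1.
rewrite expnSr expnM N_rec (leq_trans (leq_mul (leqnn _) (u_rec t))) //.
have -> : (a ^ 2 ^ t) ^ 2 * (u t ^ 2 * N t ^ 2) = (a ^ 2 ^ t * u t) ^ 2 * N t ^ 2.
  by rewrite mulnA -expnMn.
by rewrite (_ : 4 = 2 + 2) // expnD leq_mul2r leq_exp2r ?IH ?orbT.
Qed.

Fixpoint amp (n t : nat) : seq (circuit n) :=
  if t is t'.+1 then
    let A := [seq CAnd a b | a <- amp n t', b <- amp n t'] in
    [seq COr a b | a <- A, b <- A]
  else map (@CVar n) (enum 'I_n).

Lemma size_amp n t : size (amp n t) = n ^ 4 ^ t.
Proof.
elim: t => [|t IH] /=; first by rewrite size_map size_enum_ord expn1.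
by rewrite !size_allpairs IH -!expnD expnS; congr (n ^ _); lia.
Qed.

Lemma size_ampS n t : size (amp n t.+1) = size (amp n t) ^ 4.
Proof. by rewrite !size_amp expnS mulnC expnM. Qed.

Lemma cdepth_amp n t : all (fun C => cdepth C == 2 * t) (amp n t).
Proof.
elim: t => [|t IH] /=; first by rewrite all_map; apply/allT.
have depthA : all (fun C => cdepth C == (2 * t).+1)
                  [seq CAnd a b | a <- amp n t, b <- amp n t].
  apply: (all_allpairs (f := @CAnd n) IH IH) => a b /eqP da /eqP db.
  by rewrite /= da db maxnn.
apply: (all_allpairs (f := @COr n) depthA depthA) => a b /eqP da /eqP db.
by rewrite /= da db maxnn mulnS.
Qed.

Section AmpCounts.
Variables (n : nat) (x : 'I_n -> bool).

Lemma count_amp0 (P : pred bool) :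
  count (fun C => P (ceval C x)) (amp n 0) = #|[pred i | P (x i)]|.
Proof. by rewrite /= count_map cardE enumT /enum_mem size_filter. Qed.

Lemma count_ampS_true t :
  2 * count (fun C => ceval C x) (amp n t.+1) <=
  (2 * count (fun C => ceval C x) (amp n t)) ^ 2 * size (amp n t) ^ 2.
Proof.
rewrite /=; set L := amp n t; set A := [seq CAnd a b | a <- L, b <- L].
have countA : count (fun C => ceval C x) A = count (fun C => ceval C x) L ^ 2.
  by rewrite (count_allpairs_and (P1 := fun C => ceval C x) (P2 := fun C => ceval C x)).
have := count_allpairs_or (f := @COr n) (P := fun C => ceval C x)
  (P1 := fun C => ceval C x) (P2 := fun C => ceval C x) A A (fun a b ab => ab).
rewrite countA size_allpairs; nia.
Qed.

Lemma count_ampS_false t :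
  4 * count (fun C => ~~ ceval C x) (amp n t.+1) <=
  (4 * count (fun C => ~~ ceval C x) (amp n t)) ^ 2 * size (amp n t) ^ 2.
Proof.
rewrite /=; set L := amp n t; set A := [seq CAnd a b | a <- L, b <- L].
have countA : count (fun C => ~~ ceval C x) A <=
              count (fun C => ~~ ceval C x) L * size L + size L * count (fun C => ~~ ceval C x) L.
  by apply: count_allpairs_or => a b /=; rewrite negb_and.
rewrite (count_allpairs_and (P1 := fun C => ~~ ceval C x) (P2 := fun C => ~~ ceval C x)) => [|a b].
  by have := leq_mul countA countA; nia.
by rewrite /= negb_or.
Qed.

Lemma amp_rarely_true t : 4 * #|[pred i | x i]| <= n ->
  2 ^ 2 ^ t * (2 * count (fun C => ceval C x) (amp n t)) <= size (amp n t).
Proof.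
move=> few_ones; apply: (squaring_decay count_ampS_true (size_ampS n)).
by rewrite (count_amp0 id) size_map size_enum_ord; lia.
Qed.

Lemma amp_rarely_false t : 8 * #|[pred i | ~~ x i]| <= n ->
  2 ^ 2 ^ t * (4 * count (fun C => ~~ ceval C x) (amp n t)) <= size (amp n t).
Proof.
move=> few_zeros; apply: (squaring_decay count_ampS_false (size_ampS n)).
by rewrite (count_amp0 negb) size_map size_enum_ord; lia.
Qed.

End AmpCounts.

Definition separates n (C : circuit n) (x : 'I_n -> bool) : bool :=
  ((8 * #|[pred i | x i]| <= n) ==> ~~ ceval C x) &&
  ((8 * #|[pred i | ~~ x i]| <= n) ==> ceval C x).

Lemma count_andl (T : Type) (b : bool) (P : pred T) s :
  count (fun y => b && P y) s = b * count P s.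
Proof. by case: b; rewrite ?mul1n ?mul0n //; elim: s. Qed.

Lemma amp_rarely_not_separating n x t :
  2 ^ 2 ^ t * count (fun C => ~~ separates C x) (amp n t) <= size (amp n t).
Proof.
have ones_bound := amp_rarely_true (x := x) t.
have zeros_bound := amp_rarely_false (x := x) t.
have : count (fun C => ~~ separates C x) (amp n t) <=
    (8 * #|[pred i | x i]| <= n) * count (fun C => ceval C x) (amp n t) +
    (8 * #|[pred i | ~~ x i]| <= n) * count (fun C => ~~ ceval C x) (amp n t).
  rewrite -!count_andl -count_predUI (leq_trans _ (leq_addr _ _)) //.
  apply: sub_count => C /=; rewrite /separates.
  by case: (ceval C x); case: (8 * _ <= n); case: (8 * _ <= n).
move/(leq_mul (leqnn (2 ^ 2 ^ t))).
case: (boolP (8 * #|[pred i | x i]| <= n)) => few_ones;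
case: (boolP (8 * #|[pred i | ~~ x i]| <= n)) => few_zeros; rewrite /= ?mul1n ?mul0n.
- have := ones_bound ltac:(lia); have := zeros_bound few_zeros; nia.
- have := ones_bound ltac:(lia); nia.
- have := zeros_bound few_zeros; nia.
- by rewrite addn0 muln0 leqn0 => /eqP->.
Qed.

Lemma count_exists (T : Type) (I : finType) (P : I -> pred T) s :
  count (fun a => [exists i, P i a]) s <= \sum_i count (P i) s.
Proof.
elim: s => [|a s IH] /=; first by rewrite big1.
rewrite big_split /= leq_add //.
case: (boolP [exists i, P i a]) => // /existsP[i Pia].
by rewrite (bigD1 i) //= Pia.
Qed.

Lemma eq_ceval n (C : circuit n) x y : x =1 y -> ceval C x = ceval C y.
Proof. by move=> xy; elim: C => /= [i|C1 -> C2 ->|C1 -> C2 ->]. Qed.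

Lemma eq_separates n (C : circuit n) x y : x =1 y -> separates C x = separates C y.
Proof.
move=> xy; rewrite /separates (eq_ceval C xy).
have card_xy (P : pred bool) : #|[pred i | P (x i)]| = #|[pred i | P (y i)]|.
  by apply: eq_card => i; rewrite !inE xy.
by rewrite (card_xy id) (card_xy negb).
Qed.

Lemma exists_separating_circuit n t : 0 < n -> n < 2 ^ t ->
  exists C : circuit n, cdepth C = 2 * t /\ forall x, separates C x.
Proof.
move=> n_gt0 n_lt; set N := size (amp n t).
have N_gt0 : 0 < N by rewrite /N size_amp expn_gt0 n_gt0.
pose bad C := [exists x : {ffun 'I_n -> bool}, ~~ separates C x].
have : 2 ^ 2 ^ t * count bad (amp n t) < 2 ^ 2 ^ t * N.
  apply: (leq_ltn_trans (leq_mul (leqnn _) (count_exists _ _))).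
  rewrite big_distrr /=.
  apply: (@leq_ltn_trans (\sum_(x : {ffun 'I_n -> bool}) N)).
    by apply: leq_sum => x _; apply: amp_rarely_not_separating.
  by rewrite sum_nat_const card_ffun card_bool card_ord ltn_mul2r N_gt0 ltn_exp2l.
rewrite ltn_mul2l => /andP[_ few_bad].
have : has (predC bad) (amp n t).
  by rewrite has_count; move: few_bad; rewrite /N -(count_predC bad); lia.
set C0 := CVar (Ordinal n_gt0).
case/(has_nthP C0) => i lt_i /= /existsPn good.
exists (nth C0 (amp n t) i); split; first exact/eqP/(all_nthP _ (cdepth_amp n t)).
move=> x; rewrite -(@eq_separates _ _ [ffun i => x i]) => [|j]; last exact: ffunE.
exact/negPn/good.
Qed.

Fixpoint queries n (t : dtree n) (f : 'I_n -> bool) : seq 'I_n :=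
  if t is Query x t0 t1 then x :: queries (if f x then t1 else t0) f else [::].

Lemma size_queries n (t : dtree n) f : size (queries t f) = nqueries t f.
Proof. by elim: t => //= x t0 IH0 t1 IH1; case: (f x); rewrite /= ?IH0 ?IH1. Qed.

Lemma run_eq_on_queries n (t : dtree n) f g :
  {in queries t f, g =1 f} -> run t g = run t f.
Proof.
elim: t => //= x t0 IH0 t1 IH1 gf.
rewrite gf ?mem_head //; case: (f x) gf => gf; [apply: IH1 | apply: IH0];
  by move=> y qy; apply: gf; rewrite in_cons qy orbT.
Qed.

Section AcceptanceProbability.
Local Open Scope R_scope.
Variable n : nat.

Definition mass (T : rtree n) : R := List.fold_right (fun p acc => fst p + acc) 0 T.

Definition nonneg_weights (T : rtree n) : Prop := forall p, List.In p T -> 0 <= fst p.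

Lemma acc_prob_le_mass f (T : rtree n) : nonneg_weights T -> acc_prob T f <= mass T.
Proof.
elim: T => [|p T IH] /= w_ge0; first lra.
have := w_ge0 p (or_introl erefl); have := IH (fun q Tq => w_ge0 q (or_intror Tq)).
case: (run (snd p) f); lra.
Qed.

Lemma acc_prob_lt_mass f (T : rtree n) p : nonneg_weights T ->
  List.In p T -> 0 < fst p -> run (snd p) f = false -> acc_prob T f < mass T.
Proof.
elim: T => [|q T IH] w_ge0 //= [<-|Tp] p_gt0 rej.
  by have := acc_prob_le_mass f (fun q Tq => w_ge0 q (or_intror Tq)); rewrite rej; lra.
have := w_ge0 q (or_introl erefl); have := IH (fun q Tq => w_ge0 q (or_intror Tq)) Tp p_gt0 rej.
case: (run (snd q) f); lra.
Qed.

Lemma rejecting_tree f (T : rtree n) : nonneg_weights T -> acc_prob T f < mass T ->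
  exists p, List.In p T /\ 0 < fst p /\ run (snd p) f = false.
Proof.
elim: T => [|p T IH] w_ge0 /=; first lra.
have w_ge0' : nonneg_weights T by move=> q Tq; apply: w_ge0; right.
have := acc_prob_le_mass f w_ge0'; have := w_ge0 p (or_introl erefl).
case: (Rlt_le_dec (acc_prob T f) (mass T)) => [lt_rest _ _ _|ge_rest].
  by have [q [Tq q_rej]] := IH w_ge0' lt_rest; exists q; split; [right|].
case rej: (run (snd p) f) => p_ge0 le_rest lt; first lra.
by exists p; split; [left|split=> //; lra].
Qed.

Lemma one_sided_lower_bound (T : rtree n) (ok : ('I_n -> bool) -> Prop) f q :
  is_distribution T -> (forall g, ok g -> acc_prob T g = 1) -> acc_prob T f < 1 ->
  (forall S : seq 'I_n, (size S < q)%N -> exists2 g, ok g & {in S, g =1 f}) ->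
  exists p, List.In p T /\ 0 < fst p /\ (q <= nqueries (snd p) f)%N.
Proof.
move=> [w_ge0 mass_T] accept_ok reject_f fool; change (mass T = 1) in mass_T.
have [p [Tp [p_gt0 p_rej]]] : exists p, List.In p T /\ 0 < fst p /\ run (snd p) f = false.
  by apply: rejecting_tree w_ge0 _; rewrite mass_T.
exists p; do 2!split=> //; rewrite leqNgt; apply/negP => few_queries.
have [g ok_g gf] : exists2 g, ok g & {in queries (snd p) f, g =1 f}.
  by apply: fool; rewrite size_queries.
have := acc_prob_lt_mass w_ge0 Tp p_gt0 (etrans (run_eq_on_queries gf) p_rej).
by rewrite accept_ok // mass_T; lra.
Qed.

End AcceptanceProbability.

Section Instances.
Local Open Scope R_scope.

Lemma INR_expn m e : INR (m ^ e) = INR m ^ e.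
Proof. by elim: e => [|e IH]; rewrite ?expn0 // expnS mult_INR IH. Qed.

Lemma trunc_log_le_log2 n : (0 < n)%N -> INR (trunc_log 2 n) <= log2 (INR n).
Proof.
move=> n_gt0; set e := trunc_log 2 n.
have ln2_gt0 : 0 < ln (INR 2) by rewrite (_ : INR 2 = 2); [have := ln_lt_2|]; simpl; lra.
have pow_le_n : INR 2 ^ e <= INR n by rewrite -INR_expn; apply/le_INR/leP/trunc_logP.
have pow_gt0 : 0 < INR 2 ^ e by apply: pow_lt; simpl; lra.
have : INR e * ln (INR 2) <= ln (INR n).
  rewrite -ln_pow; last by simpl; lra.
  case: (Rle_lt_or_eq_dec _ _ pow_le_n) => [/(ln_increasing _ _ pow_gt0)|->]; lra.
move=> le_ln; apply: (Rmult_le_reg_r _ _ _ ln2_gt0).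
by rewrite /log2 /Rdiv Rmult_assoc Rinv_l; lra.
Qed.

Lemma wsum_const n c (P : pred 'I_n) : wsum (fun=> c) P = INR #|P| * c.
Proof.
rewrite /wsum big_const_seq cardE /enum_mem size_filter.
elim: (count _ _) => [|k IH]; first by rewrite /= Rmult_0_l.
by rewrite iterS IH S_INR; lra.
Qed.

Lemma depth_within_budget n : (0 < n)%N ->
  INR (2 * (trunc_log 2 n).+1) < 3 + 3 * log2 (INR n).
Proof.
move=> n_gt0; have := trunc_log_le_log2 n_gt0; have := pos_INR (trunc_log 2 n).
by rewrite mult_INR !S_INR INR_0; lra.
Qed.

Definition uniform_instance n (C : circuit n) : instance n :=
  Instance C true (fun=> / INR n).

Lemma valid_uniform_instance D n (C : circuit n) : (0 < n)%N ->
  INR (cdepth C) < D + D * log2 (INR n) -> valid_instance D (uniform_instance C).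
Proof.
move=> n_gt0 depth_C; have n_ge1 : 1 <= INR n by apply/(le_INR 1)/leP.
split=> //; split=> [x|] /=.
  split; first by apply/Rlt_le/Rinv_0_lt_compat; lra.
  by have := Rinv_le_contravar 1 (INR n) ltac:(lra) n_ge1; rewrite Rinv_1; lra.
by rewrite wsum_const cardT size_enum_ord Rinv_r //; lra.
Qed.

Lemma far_uniform_instance eps n (C : circuit n) f : (0 < n)%N ->
  (forall g, ceval C g -> eps * INR n < INR #|[pred i | f i != g i]|) ->
  far eps (uniform_instance C) f.
Proof.
move=> n_gt0 far_f g /= sat_g; rewrite wsum_const.
have n_pos : 0 < INR n by apply/lt_0_INR/ltP.
apply: (Rmult_lt_reg_r (INR n)) => //.
by rewrite Rmult_assoc Rinv_l ?Rmult_1_r; [apply: far_f | lra].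
Qed.

Lemma far_all_false n (C : circuit n) : (0 < n)%N -> (forall x, separates C x) ->
  far (/ 8) (uniform_instance C) (fun=> false).
Proof.
move=> n_gt0 sep_C; apply: (far_uniform_instance n_gt0) => g sat_g.
have many_ones : (n < 8 * #|[pred i | false != g i]|)%N.
  have /andP[/implyP sparse_false _] := sep_C g.
  rewrite ltnNge (eq_card (B := [pred i | g i])) => [|i]; last first.
    by rewrite !inE eq_sym eqbF_neg negbK.
  exact: contraL sparse_false sat_g.
by move/ltP/lt_INR: many_ones; rewrite mult_INR (_ : INR 8 = 8) /=; lra.
Qed.

End Instances.

Lemma separating_ceval_notin n (C : circuit n) (S : seq 'I_n) :
  (forall x, separates C x) -> 8 * size S <= n -> ceval C (fun i => i \notin S).
Proof.
move=> sep_C small_S; have /andP[_ /implyP -> //] := sep_C (fun i => i \notin S).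
have : #|[pred i | ~~ (i \notin S)]| <= size S.
  apply: leq_trans (card_size S); apply/subset_leq_card/subsetP => i.
  by rewrite !inE negbK.
move: #|_| => k; lia.
Qed.

Local Open Scope R_scope.

Theorem mainTheorem13 :
  exists D : R, Rlt R1 D /\
  exists eps : R, Rlt R0 eps /\
  exists c : R, Rlt R0 c /\
  exists N : nat,
    forall T : tester, one_sided_tester D eps T ->
    forall n : nat, (N <= n)%N ->
    exists I : instance n,
      valid_instance D I /\ inst_l I = true /\
      exists (f : 'I_n -> bool) (p : R * dtree n),
        List.In p (T n I) /\ Rlt R0 (fst p) /\
        Rle (Rmult c (INR n)) (INR (nqueries (snd p) f)).
Proof.
exists 3; split; first lra.
exists (/ 8); split; first lra.
exists (/ 8); split; first lra.
exists 1%N => T tester_T n n_gt0.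
have [C [depth_C sep_C]] := exists_separating_circuit n_gt0 (trunc_log_ltn n (isT : (1 < 2)%N)).
set I := uniform_instance C.
have valid_I : valid_instance 3 I.
  by apply: (valid_uniform_instance n_gt0); rewrite depth_C; apply: depth_within_budget.
have [distr [accept_sat reject_far]] := tester_T n I valid_I erefl.
have reject_false : acc_prob (T n I) (fun=> false) < 1.
  by have := reject_far _ (far_all_false n_gt0 sep_C); rewrite (_ : INR 3 = 3) /=; lra.
have [p [Tp [p_gt0 many_queries]]] : exists p, List.In p (T n I) /\ 0 < fst p /\
    ((n + 7) %/ 8 <= nqueries (snd p) (fun=> false))%N.
  apply: (one_sided_lower_bound distr accept_sat reject_false) => S small_S.
  exists (fun i => i \notin S) => [|i ->] //.
  by apply: separating_ceval_notin sep_C _; lia.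
exists I; do 2!split=> //; exists (fun=> false), p; do 2!split=> //.
have : (n <= 8 * nqueries (snd p) (fun=> false))%N by lia.
by move/leP/le_INR; rewrite mult_INR (_ : INR 8 = 8) /=; lra.
Qed.
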